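(* Let $\mu$ be an infinite cardinal and $k\geq 1$ a natural number. Then $\mu\to_{hc}(\mu)^2_k$; that is, for every coloring $c:[\mu]^2\to k$ there exist $i<k$ and $X\subseteq\mu$ with $|X|=\mu$ such that the graph $(X,\,c^{-1}(i)\cap[X]^2)$ is highly connected.
   Context: For a set $S$ and cardinal $\theta$, $[S]^\theta$ denotes the set of subsets of $S$ of size $\theta$; the complete graph on a cardinal $\nu$ has vertex set $\nu$ and edge set $[\nu]^2$. A graph $G=(V,E)$ is $\kappa$-connected if for every set $D\subseteq V$ with $|D|<\kappa$ the graph induced on $V\setminus D$ is connected. $G$ is highly connected if it is $|V|$-connected. For cardinals $\nu,\mu,\lambda$, write $\nu\to_{hc}(\mu)^2_\lambda$ if for every $c:[\nu]^2\to\lambda$ there are $\xi<\lambda$ and $X\in[\nu]^\mu$ such that $(X,c^{-1}(\xi)\cap[X]^2)$ is highly connected. *)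

(* Cardinals are represented by types / subsets (predicates). *)
From Stdlib Require Import List Relations Classical.

Definition card_le {S T : Type} (A : S -> Prop) (B : T -> Prop) : Prop :=
  exists f : S -> T,
    (forall x, A x -> B (f x)) /\
    (forall x y, A x -> A y -> f x = f y -> x = y).

Definition card_eq {S T : Type} (A : S -> Prop) (B : T -> Prop) : Prop :=
  exists f : S -> T,
    (forall x, A x -> B (f x)) /\
    (forall x y, A x -> A y -> f x = f y -> x = y) /\
    (forall y, B y -> exists x, A x /\ f x = y).

Definition card_lt {S T : Type} (A : S -> Prop) (B : T -> Prop) : Prop :=
  card_le A B /\ ~ card_le B A.

Definition infinite_type (T : Type) : Prop :=
  ~ exists l : list T, forall x : T, In x l.

Definition induced_edge {T : Type} (V : T -> Prop) (E : T -> T -> Prop) : T -> T -> Prop :=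
  fun x y => V x /\ V y /\ E x y.

Definition connected {T : Type} (V : T -> Prop) (E : T -> T -> Prop) : Prop :=
  forall x y, V x -> V y -> clos_refl_trans T (induced_edge V E) x y.

(* G = (V, E) is kappa-connected, where kappa = |K|: deleting any D subset of V
   with |D| < kappa leaves a connected induced graph. *)
Definition kappa_connected {T U : Type} (K : U -> Prop) (V : T -> Prop) (E : T -> T -> Prop) : Prop :=
  forall D : T -> Prop, (forall x, D x -> V x) -> card_lt D K ->
    connected (fun x => V x /\ ~ D x) E.

Definition highly_connected {T : Type} (V : T -> Prop) (E : T -> T -> Prop) : Prop :=
  kappa_connected V V E.

(* edges of colour i of a colouring c of unordered pairs (given as a
   symmetric function on pairs of distinct elements) *)
Definition colour_class {T : Type} (c : T -> T -> nat) (i : nat) : T -> T -> Prop :=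
  fun x y => x <> y /\ c x y = i.

From Stdlib Require Import List Relations Classical.
From Stdlib Require Import ClassicalEpsilon PeanoNat Lia.
From mathcomp Require classical_sets filter cardinality.

(* Take a uniform ultrafilter U on mu, one all of whose members have size mu.  It exists because a
   union of two sets of size < mu has size < mu, by comparability of cardinals and kappa + kappa =
   kappa for infinite kappa (both by Zorn's lemma).  Every vertex x has a colour whose neighbourhood
   lies in U, and for some colour i the set X of vertices whose i-neighbourhood lies in U is itself
   in U.  Any two vertices of X then have U-many common i-neighbours in X, so deleting fewer than mu
   vertices leaves them joined by a path of length two. *)

Lemma partial_choice {X Y} (d : X -> Y) (A : X -> Prop) (R : X -> Y -> Prop) :
  (forall x, A x -> exists y, R x y) -> exists f : X -> Y, forall x, A x -> R x (f x).
Proof.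
  intros H.
  assert (H' : forall x, exists y, A x -> R x y).
  { intros x. destruct (classic (A x)) as [Ax | nAx].
    - destruct (H x Ax) as [y Hy]. exists y. auto.
    - exists (d x). contradiction. }
  destruct (choice _ H') as [f Hf]. exists f. auto.
Qed.

Definition chain {U} (F : (U -> Prop) -> Prop) : Prop :=
  forall X Y, F X -> F Y -> (forall u, X u -> Y u) \/ (forall u, Y u -> X u).

Lemma zorn_subsets {U} (P : (U -> Prop) -> Prop) :
  (forall F, (forall X, F X -> P X) -> chain F -> P (fun u => exists2 X, F X & X u)) ->
  exists M, P M /\ forall B, (forall u, M u -> B u) -> P B -> forall u, B u -> M u.
Proof.
  intros Hchain.
  destruct (classical_sets.Zorn_bigcup Hchain) as [M [PM Mmax]].
  exists M. split; [exact PM |]. intros B MB PB u Bu.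
  apply NNPP. intros nMu. apply (Mmax B); [| exact PB].
  split; [exact MB |]. intros BM. exact (nMu (BM u Bu)).
Qed.

Definition one_to_one {S T} (R : S * T -> Prop) : Prop :=
  forall p q, R p -> R q -> (fst p = fst q <-> snd p = snd q).

Lemma one_to_one_union {S T} (F : (S * T -> Prop) -> Prop) :
  (forall R, F R -> one_to_one R) -> chain F -> one_to_one (fun p => exists2 R, F R & R p).
Proof.
  intros Hinj Hch p q [R FR Rp] [R' FR' R'q].
  destruct (Hch R R' FR FR') as [RR' | R'R].
  - apply (Hinj R'); auto.
  - apply (Hinj R); auto.
Qed.

Definition finite_pred {T} (A : T -> Prop) : Prop :=
  exists l : list T, forall x, A x -> In x l.

Lemma card_le_subset {T} (A B : T -> Prop) : (forall x, A x -> B x) -> card_le A B.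
Proof. intros AB. exists (fun x => x). auto. Qed.

Lemma card_le_trans {S T U} (A : S -> Prop) (B : T -> Prop) (C : U -> Prop) :
  card_le A B -> card_le B C -> card_le A C.
Proof.
  intros [f [fAB f_inj]] [g [gBC g_inj]]. exists (fun x => g (f x)). split; auto.
Qed.

Lemma card_le_finite {S T} (A : S -> Prop) (B : T -> Prop) :
  card_le A B -> finite_pred B -> finite_pred A.
Proof.
  intros [f [fAB f_inj]] [l Hl].
  assert (Hgen : forall l (A : S -> Prop),
    (forall x y, A x -> A y -> f x = f y -> x = y) ->
    (forall x, A x -> In (f x) l) -> finite_pred A).
  { clear. induction l as [| y l IH]; intros A f_inj Hl.
    - exists nil. intros x Ax. exact (Hl x Ax).
    - destruct (classic (exists x, A x /\ f x = y)) as [[x [Ax fx]] | Hno].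
      + destruct (IH (fun z => A z /\ z <> x)) as [l' Hl'].
        * intros a b [Aa _] [Ab _]. auto.
        * intros z [Az zx]. destruct (Hl z Az) as [fz | fz]; auto.
          exfalso. apply zx. apply f_inj; congruence.
        * exists (x :: l'). intros z Az. destruct (classic (z = x)); [left | right]; auto.
      + apply (IH A f_inj). intros z Az. destruct (Hl z Az) as [fz | fz]; auto.
        exfalso. apply Hno. eauto. }
  apply (Hgen l A); auto.
Qed.

Lemma finite_union {T} (X Y : T -> Prop) :
  finite_pred X -> finite_pred Y -> finite_pred (fun x => X x \/ Y x).
Proof.
  intros [l Hl] [l' Hl']. exists (l ++ l'). intros x [Xx | Yx]; apply in_or_app; auto.
Qed.

Lemma finite_card_le_nat {T} (A : T -> Prop) :
  finite_pred A -> card_le A (fun _ : nat => True).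
Proof.
  intros [l Hl].
  destruct (partial_choice (fun _ => 0) A (fun x n => nth_error l n = Some x)) as [e He].
  { intros x Ax. apply In_nth_error, Hl, Ax. }
  exists e. split; auto.
  intros x y Ax Ay E. apply He in Ax. apply He in Ay. congruence.
Qed.

Fixpoint fresh_list {T} (pick : list T -> T) (n : nat) : list T :=
  match n with
  | 0 => nil
  | S n => pick (fresh_list pick n) :: fresh_list pick n
  end.

Lemma nat_embedding {T} (A : T -> Prop) :
  ~ finite_pred A ->
  exists nu : nat -> T, (forall n, A (nu n)) /\ (forall n m, nu n = nu m -> n = m).
Proof.
  intros HA.
  assert (Hfresh : forall l, exists x, A x /\ ~ In x l).
  { intros l. apply NNPP. intros H. apply HA. exists l. intros x Ax.
    apply NNPP. intros nx. apply H. eauto. }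
  destruct (Hfresh nil) as [x0 _].
  destruct (partial_choice (fun _ => x0) (fun _ => True) (fun l x => A x /\ ~ In x l))
    as [pick Hpick].
  { intros l _. apply Hfresh. }
  exists (fun n => pick (fresh_list pick n)). split.
  - intros n. apply (Hpick _ I).
  - assert (Hin : forall n m, m < n -> In (pick (fresh_list pick m)) (fresh_list pick n)).
    { induction n as [| n IH]; intros m Hm; [lia |]. simpl.
      destruct (Nat.eq_dec m n) as [-> | Hne]; [left; reflexivity |].
      right. apply IH. lia. }
    intros n m E. destruct (Nat.lt_total n m) as [Hnm | [Hnm | Hnm]]; auto; exfalso.
    + apply (proj2 (Hpick (fresh_list pick m) I)). rewrite <- E. apply Hin, Hnm.
    + apply (proj2 (Hpick (fresh_list pick n) I)). rewrite E. apply Hin, Hnm.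
Qed.

Lemma card_le_total {T} (A B : T -> Prop) : card_le A B \/ card_le B A.
Proof.
  set (P := fun R : T * T -> Prop =>
    one_to_one R /\ forall p, R p -> A (fst p) /\ B (snd p)).
  destruct (zorn_subsets P) as [M [[M_inj M_sub] Mmax]].
  { intros F FP Fch. split.
    - apply one_to_one_union; [intros R FR; apply (FP R FR) | exact Fch].
    - intros p [R FR Rp]. apply (FP R FR), Rp. }
  destruct (classic (forall a, A a -> exists b, M (a, b))) as [HA | HA].
  { left. destruct (partial_choice (fun x => x) A (fun a b => M (a, b)) HA) as [f Hf].
    exists f. split.
    - intros a Aa. apply (M_sub _ (Hf a Aa)).
    - intros a a' Aa Aa' E. apply (M_inj (a, f a) (a', f a')); auto. }
  destruct (classic (forall b, B b -> exists a, M (a, b))) as [HB | HB].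
  { right. destruct (partial_choice (fun x => x) B (fun b a => M (a, b)) HB) as [f Hf].
    exists f. split.
    - intros b Bb. apply (M_sub _ (Hf b Bb)).
    - intros b b' Bb Bb' E. apply (M_inj (f b, b) (f b', b')); auto. }
  (* neither side is exhausted: an unmatched pair extends the maximal matching *)
  exfalso.
  apply not_all_ex_not in HA as [a Ha]. apply imply_to_and in Ha as [Aa na].
  apply not_all_ex_not in HB as [b Hb]. apply imply_to_and in Hb as [Bb nb].
  assert (PM' : P (fun p => M p \/ p = (a, b))).
  { split.
    - intros [x y] [x' y'] [Mp | Ep] [Mq | Eq]; simpl.
      + apply (M_inj (x, y) (x', y')); auto.
      + injection Eq as -> ->. split; intros ->; exfalso; eauto.
      + injection Ep as -> ->. split; intros <-; exfalso; eauto.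
      + injection Ep as -> ->. injection Eq as -> ->. tauto.
    - intros p [Mp | ->]; auto. }
  apply na. exists b. apply (Mmax _ (fun p Mp => or_introl Mp) PM'). right. reflexivity.
Qed.

Definition sum_pred {T U} (A : T -> Prop) (B : U -> Prop) (s : T + U) : Prop :=
  match s with inl x => A x | inr y => B y end.

Lemma card_le_sum_countable {T U} (A : T -> Prop) (B : U -> Prop) :
  ~ finite_pred A -> card_le B (fun _ : nat => True) -> card_le (sum_pred A B) A.
Proof.
  intros HA [e [_ e_inj]].
  destruct (nat_embedding A HA) as [nu [nuA nu_inj]].
  destruct (partial_choice (fun _ => 0) (fun x => exists n, x = nu n) (fun x n => x = nu n))
    as [idx Hidx].
  { intros x H. exact H. }
  (* Hilbert's hotel: [nu n] moves to [nu (2 * n)], freeing the odd positions for [B]. *)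
  set (code := fun s => match s with
    | inl x => if excluded_middle_informative (exists n, x = nu n) then nu (2 * idx x) else x
    | inr y => nu (2 * e y + 1)
    end).
  exists code. split.
  - intros [x | y] H; simpl; [destruct excluded_middle_informative |]; auto.
  - intros [x | y] [x' | y'] H H' E; simpl in E.
    + destruct (excluded_middle_informative (exists n, x = nu n)) as [hx | hx];
      destruct (excluded_middle_informative (exists n, x' = nu n)) as [hx' | hx'].
      * apply nu_inj in E. rewrite (Hidx x hx), (Hidx x' hx'). do 2 f_equal. lia.
      * exfalso. apply hx'. eauto using eq_sym.
      * exfalso. apply hx. eauto.
      * congruence.
    + destruct excluded_middle_informative as [hx | hx].
      * apply nu_inj in E. lia.
      * exfalso. apply hx. eauto using eq_sym.
    + destruct excluded_middle_informative as [hx | hx].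
      * apply nu_inj in E. lia.
      * exfalso. apply hx. eauto using eq_sym.
    + apply nu_inj in E. f_equal. apply e_inj; auto. lia.
Qed.

Definition graph_dom {T} (G : (T * bool) * T -> Prop) (x : T) : Prop :=
  exists b y, G ((x, b), y).

(* [G] is the graph of an injection from [graph_dom G * bool] into [graph_dom G], a subset of [A]. *)
Definition doubling_graph {T} (A : T -> Prop) (G : (T * bool) * T -> Prop) : Prop :=
  one_to_one G /\
  (forall p, G p -> A (fst (fst p)) /\ A (snd p)) /\
  (forall x b, graph_dom G x -> exists y, G ((x, b), y)) /\
  (forall p, G p -> graph_dom G (snd p)).

Lemma doubling_graph_union {T} (A : T -> Prop) (F : ((T * bool) * T -> Prop) -> Prop) :
  (forall G, F G -> doubling_graph A G) -> chain F ->
  doubling_graph A (fun p => exists2 G, F G & G p).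
Proof.
  intros FD Fch. split; [| split; [| split]].
  - apply one_to_one_union; [intros G FG; apply (FD G FG) | exact Fch].
  - intros p [G FG Gp]. apply (FD G FG), Gp.
  - intros x b [b0 [y0 [G FG Gp]]].
    destruct (proj1 (proj2 (proj2 (FD G FG))) x b) as [y Gy]; [exists b0, y0; exact Gp |].
    exists y, G; auto.
  - intros p [G FG Gp]. destruct (proj2 (proj2 (proj2 (FD G FG))) p Gp) as [b [y Gy]].
    exists b, y, G; auto.
Qed.

Lemma double_index_inj n m b b' :
  2 * n + Nat.b2n b = 2 * m + Nat.b2n b' -> n = m /\ b = b'.
Proof. destruct b, b'; simpl; lia. Qed.

Lemma doubling_graph_extend {T} (A : T -> Prop) (G : (T * bool) * T -> Prop)
  (nu : nat -> T) :
  doubling_graph A G ->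
  (forall n, A (nu n) /\ ~ graph_dom G (nu n)) -> (forall n m, nu n = nu m -> n = m) ->
  doubling_graph A (fun p => G p \/ exists n b, p = ((nu n, b), nu (2 * n + Nat.b2n b))).
Proof.
  intros [G_inj [G_sub [G_dom G_rng]]] nuA nu_inj.
  assert (new_dom : forall p n b, G p -> fst p <> (nu n, b)).
  { intros [[x b0] y] n b Gp E. injection E as -> ->. apply (proj2 (nuA n)). exists b, y. exact Gp. }
  assert (new_rng : forall p n, G p -> snd p <> nu n).
  { intros p n Gp E. apply (proj2 (nuA n)). rewrite <- E. apply G_rng, Gp. }
  split; [| split; [| split]].
  - intros p q [Gp | [n [b ->]]] [Gq | [m [b' ->]]]; simpl.
    + apply G_inj; auto.
    + split; intros E; exfalso; [eapply new_dom | eapply new_rng]; eauto.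
    + split; intros E; exfalso; [eapply new_dom | eapply new_rng]; eauto using eq_sym.
    + split; intros E.
      * injection E as En ->. apply nu_inj in En. subst. reflexivity.
      * apply nu_inj, double_index_inj in E as [-> ->]. reflexivity.
  - intros p [Gp | [n [b ->]]]; [apply G_sub, Gp | split; apply nuA].
  - intros x b [b0 [y0 [Gp | [n [b1 E]]]]].
    + destruct (G_dom x b) as [y Gy]; [exists b0, y0; exact Gp |]. exists y. left. exact Gy.
    + injection E as -> _ _. exists (nu (2 * n + Nat.b2n b)). right. exists n, b. reflexivity.
  - intros p [Gp | [n [b ->]]].
    + destruct (G_rng p Gp) as [b [y Gy]]. exists b, y. left. exact Gy.
    + exists true, (nu (2 * (2 * n + Nat.b2n b) + 1)). right.
      exists (2 * n + Nat.b2n b), true. reflexivity.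
Qed.

Lemma card_le_double {T} (A : T -> Prop) :
  ~ finite_pred A -> card_le (fun p : T * bool => A (fst p)) A.
Proof.
  intros HA.
  destruct (zorn_subsets (doubling_graph A)) as [G [DG Gmax]].
  { apply doubling_graph_union. }
  assert (Hrest : finite_pred (fun x => A x /\ ~ graph_dom G x)).
  { apply NNPP. intros Hinf. destruct (nat_embedding _ Hinf) as [nu [nuA nu_inj]].
    pose proof (doubling_graph_extend A G nu DG nuA nu_inj) as DG'.
    apply (proj2 (nuA 0)). exists true, (nu 1).
    apply (Gmax _ (fun p Gp => or_introl Gp) DG'). right. exists 0, true. reflexivity. }
  destruct DG as [G_inj [G_sub [G_dom _]]].
  destruct (partial_choice fst (fun p => graph_dom G (fst p)) (fun p y => G (p, y)))
    as [g Hg].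
  { intros [x b] Hx. apply (G_dom x b Hx). }
  set (rest := fun p : T * bool => A (fst p) /\ ~ graph_dom G (fst p)).
  apply (card_le_trans _ (sum_pred A rest)).
  - exists (fun p => if excluded_middle_informative (graph_dom G (fst p)) then inl (g p) else inr p).
    split.
    + intros p Ap. destruct excluded_middle_informative as [h | h]; simpl.
      * apply (G_sub (p, g p)), Hg, h.
      * split; assumption.
    + intros p q Ap Aq.
      destruct (excluded_middle_informative (graph_dom G (fst p))) as [hp | hp];
      destruct (excluded_middle_informative (graph_dom G (fst q))) as [hq | hq];
      intros E; try discriminate; injection E as E; auto.
      apply (G_inj (p, g p) (q, g q)); auto.
  - apply card_le_sum_countable; [exact HA |]. apply finite_card_le_nat.
    destruct Hrest as [l Hl]. exists (list_prod l (true :: false :: nil)).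
    intros [x b] [Ax nx]. apply in_prod; [apply Hl; split; assumption |].
    destruct b; simpl; auto.
Qed.

Lemma card_le_union {T} (X Y : T -> Prop) :
  ~ finite_pred Y -> card_le X Y -> card_le (fun x => X x \/ Y x) Y.
Proof.
  intros HY [j [jXY j_inj]].
  apply (card_le_trans _ (fun p : T * bool => Y (fst p))); [| apply card_le_double, HY].
  exists (fun x => if excluded_middle_informative (Y x) then (x, true) else (j x, false)).
  split.
  - intros x Hx. destruct excluded_middle_informative as [h | h]; simpl; auto.
    apply jXY. tauto.
  - intros x y Hx Hy.
    destruct (excluded_middle_informative (Y x)) as [hx | hx];
    destruct (excluded_middle_informative (Y y)) as [hy | hy];
    intros E; injection E as E; try discriminate; auto.
    apply j_inj; tauto.
Qed.

Definition large {T} (X : T -> Prop) : Prop := card_le (fun _ : T => True) X.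

Lemma large_subset {T} (X Y : T -> Prop) : large X -> (forall x, X x -> Y x) -> large Y.
Proof. intros LX XY. apply (card_le_trans _ X); [exact LX | apply card_le_subset, XY]. Qed.

Lemma set_type_eq {T} (X : T -> Prop) (u v : classical_sets.set_type X) :
  proj1_sig u = proj1_sig v -> u = v.
Proof. apply eq_sig_hprop. intros x. apply eqtype.bool_irrelevance. Qed.

Lemma large_card_eq {T} (X : T -> Prop) : large X -> card_eq X (fun _ : T => True).
Proof.
  intros [g [gX g_inj]].
  assert (HXT : is_true (cardinality.card_eq X (@classical_sets.setT T))).
  { apply cardinality.Cantor_Bernstein; [apply cardinality.card_leT |].
    rewrite <- (cardinality.card_le_eql (cardinality.inj_card_eq (f := g) (A := classical_sets.setT)
      (fun a b _ _ => g_inj a b I I))).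
    apply cardinality.subset_card_le. intros _ [t _ <-]. apply gX, I. }
  destruct (ssrbool.elimT cardinality.card_bijP HXT) as [f [h fh hf]].
  set (in_X := fun x (Xx : X x) => exist _ x (classical_sets.mem_set Xx) : classical_sets.set_type X).
  exists (fun x => match excluded_middle_informative (X x) with
    | left Xx => proj1_sig (f (in_X x Xx))
    | right _ => x
    end).
  split; [| split].
  - intros x _. exact I.
  - intros x y Xx Xy.
    destruct (excluded_middle_informative (X x)) as [Xx' | ]; [| contradiction].
    destruct (excluded_middle_informative (X y)) as [Xy' | ]; [| contradiction].
    intros E. apply set_type_eq in E. apply (ssrfun.can_inj fh) in E.
    exact (f_equal (@proj1_sig _ _) E).
  - intros y _.
    set (s := h (exist _ y (classical_sets.mem_set I))).
    assert (Xs : X (proj1_sig s)) by apply (classical_sets.set_mem (proj2_sig s)).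
    exists (proj1_sig s). split; [exact Xs |].
    destruct excluded_middle_informative as [Xs' | ]; [| contradiction].
    replace (in_X _ Xs') with s by (apply set_type_eq; reflexivity).
    unfold s. rewrite hf. reflexivity.
Qed.

Lemma infinite_type_not_finite {T} : infinite_type T -> ~ finite_pred (fun _ : T => True).
Proof. intros HT [l Hl]. apply HT. exists l. intros x. apply Hl, I. Qed.

Section LargeSets.

Variable T : Type.
Hypothesis T_infinite : infinite_type T.

Lemma large_union_le (X Y : T -> Prop) :
  card_le X Y -> large (fun x => X x \/ Y x) -> large Y.
Proof.
  intros XY LXY. destruct (classic (finite_pred Y)) as [FY | IY].
  - exfalso. apply (infinite_type_not_finite T_infinite).
    apply (card_le_finite _ _ LXY), finite_union; [apply (card_le_finite _ _ XY) |]; exact FY.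
  - apply (card_le_trans _ _ _ LXY), card_le_union; assumption.
Qed.

Lemma large_union (X Y : T -> Prop) :
  large (fun x => X x \/ Y x) -> large X \/ large Y.
Proof.
  intros LXY. destruct (card_le_total X Y) as [XY | YX].
  - right. apply (large_union_le X Y XY LXY).
  - left. apply (large_union_le Y X YX). apply (large_subset _ _ LXY). tauto.
Qed.

Lemma small_singleton (x : T) : ~ large (fun z => z = x).
Proof.
  intros [f [Hf f_inj]]. apply T_infinite. exists (x :: nil). intros y.
  apply NNPP. intros ny.
  assert (E : y = x) by (apply f_inj; auto; rewrite (Hf y I), (Hf x I); reflexivity).
  apply ny. left. symmetry. exact E.
Qed.

Lemma not_large_empty : ~ large (fun _ : T => False).
Proof. intros [f [Hf _]]. apply T_infinite. exists nil. intros x. destruct (Hf x I). Qed.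

(* The co-small sets form a proper filter; any ultrafilter extending it is uniform. *)
Lemma uniform_ultrafilter :
  exists U : (T -> Prop) -> Prop, filter.UltraFilter U /\ forall X, U X -> large X.
Proof.
  set (cosmall := fun X : T -> Prop => ~ large (fun x => ~ X x)).
  assert (cosmall_proper : filter.ProperFilter cosmall).
  { split; [| split].
    - intros H. apply H. apply card_le_subset. auto.
    - intros L. apply not_large_empty. apply (large_subset _ _ L). intros x nx. apply nx. exact I.
    - intros X Y HX HY L.
      destruct (large_union (fun x => ~ X x) (fun x => ~ Y x)) as [LX | LY].
      + apply (large_subset _ _ L). intros x nXY. apply not_and_or, nXY.
      + exact (HX LX).
      + exact (HY LY).
    - intros X Y XY HX L. apply HX. apply (large_subset _ _ L). auto. }
  destruct (filter.ultraFilterLemma cosmall_proper) as [U [U_ultra cosmall_U]].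
  exists U. split; [exact U_ultra |].
  intros X UX. apply NNPP. intros nLX.
  assert (UnX : U (fun x => ~ X x)).
  { apply cosmall_U. intros L. apply nLX. apply (large_subset _ _ L). intros x. apply NNPP. }
  apply (filter.filter_not_empty U).
  apply (filter.filterS (P := classical_sets.setI X (fun x => ~ X x))).
  - intros x [Xx nXx]. exact (nXx Xx).
  - apply filter.filterI; assumption.
Qed.

End LargeSets.

Lemma highly_connected_of_common_neighbours {T} (V : T -> Prop) (E : T -> T -> Prop) :
  (forall D, card_lt D V -> forall x y, V x -> V y -> x <> y ->
     exists z, V z /\ ~ D z /\ E x z /\ E z y) ->
  highly_connected V E.
Proof.
  intros H D _ HD x y [Vx nDx] [Vy nDy].
  destruct (classic (x = y)) as [<- | nxy]; [apply rt_refl |].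
  destruct (H D HD x y Vx Vy nxy) as [z [Vz [nDz [Exz Ezy]]]].
  apply rt_trans with z; apply rt_step; repeat split; assumption.
Qed.

Section UniformUltrafilter.

Variables (T : Type) (U : (T -> Prop) -> Prop).
Hypothesis U_ultra : filter.UltraFilter U.
#[local] Existing Instance U_ultra.
Hypothesis U_large : forall X, U X -> large X.

Lemma ultra_inter (X Y : T -> Prop) : U X -> U Y -> U (fun x => X x /\ Y x).
Proof. apply filter.filterI. Qed.

Lemma ultra_mono (X Y : T -> Prop) : U X -> (forall x, X x -> Y x) -> U Y.
Proof. intros UX XY. exact (filter.filterS XY UX). Qed.

Lemma ultra_avoids_small (D : T -> Prop) : ~ large D -> U (fun x => ~ D x).
Proof.
  intros nLD. destruct (filter.in_ultra_setVsetC D U_ultra) as [UD | UnD]; [| exact UnD].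
  exfalso. exact (nLD (U_large D UD)).
Qed.

Lemma ultra_finite_union (k : nat) (P : nat -> T -> Prop) :
  U (fun x => exists i, i < k /\ P i x) -> exists i, i < k /\ U (P i).
Proof.
  induction k as [| k IH]; intros Hk.
  - exfalso. apply (filter.filter_not_empty U).
    apply (ultra_mono _ _ Hk). intros x [i [Hi _]]. lia.
  - destruct (filter.in_ultra_setVsetC (P k) U_ultra) as [UPk | UnPk].
    + exists k. split; [lia | exact UPk].
    + destruct IH as [i [Hi UPi]]; [| exists i; split; [lia | exact UPi]].
      apply (ultra_mono _ _ (ultra_inter _ _ Hk UnPk)).
      intros x [[i [Hi Pix]] nPkx]. exists i. split; [| exact Pix].
      destruct (Nat.eq_dec i k) as [-> | Hik]; [contradiction | lia].
Qed.

Variables (c : T -> T -> nat) (k : nat).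
Hypothesis c_sym : forall x y, x <> y -> c x y = c y x.
Hypothesis c_lt : forall x y, x <> y -> c x y < k.

Definition rich (i : nat) (x : T) : Prop := U (colour_class c i x).

Lemma exists_rich_colour : infinite_type T -> exists i, i < k /\ U (rich i).
Proof.
  intros T_infinite. apply ultra_finite_union.
  apply (ultra_mono (fun _ => True)); [apply filter.filterT |].
  intros x _. apply ultra_finite_union.
  apply (ultra_mono _ _ (ultra_avoids_small _ (small_singleton T T_infinite x))).
  intros z zx. exists (c x z). split; [apply c_lt; auto |]. split; auto.
Qed.

Lemma rich_highly_connected (i : nat) :
  U (rich i) -> highly_connected (rich i) (colour_class c i).
Proof.
  intros Urich. apply highly_connected_of_common_neighbours.
  intros D [_ not_rich_le_D] x y Rx Ry nxy.
  assert (nLD : ~ large D).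
  { intros LD. apply not_rich_le_D.
    apply (card_le_trans _ (fun _ : T => True)); [apply card_le_subset; auto | exact LD]. }
  destruct (filter.filter_ex (F := U)
    (ultra_inter _ _ (ultra_inter _ _ Urich (ultra_avoids_small D nLD)) (ultra_inter _ _ Rx Ry)))
    as [z [[Rz nDz] [[xz cxz] [yz cyz]]]].
  exists z. split; [exact Rz |]. split; [exact nDz |]. split; [split; auto |].
  split; [auto | rewrite c_sym; auto].
Qed.

End UniformUltrafilter.

Theorem mainTheorem1 (T : Type) (k : nat) :
  infinite_type T -> 1 <= k ->
  forall c : T -> T -> nat,
    (forall x y, x <> y -> c x y = c y x) ->
    (forall x y, x <> y -> c x y < k) ->
    exists i, i < k /\
      exists X : T -> Prop,
        card_eq X (fun _ : T => True) /\
        highly_connected X (colour_class c i).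
Proof.
  intros T_infinite _ c c_sym c_lt.
  destruct (uniform_ultrafilter T T_infinite) as [U [U_ultra U_large]].
  destruct (exists_rich_colour T U U_ultra U_large c k c_lt T_infinite) as [i [Hi Urich]].
  exists i. split; [exact Hi |]. exists (rich T U c i). split.
  - apply large_card_eq, U_large, Urich.
  - apply (rich_highly_connected T U U_ultra U_large c c_sym i Urich).
Qed.
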